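(* Let $b\ge3$, $2\le j\le b-1$, let $q\in[0,\infty)^b$ with $q_1\le q_2\le\dots\le q_{j-1}$, and let $0\le\alpha<1$. Let $p=(p_1,\dots,p_{j-1},0,\dots,0)$ be a probability vector in $\mathbb R^b$ (i.e. $p_i=0$ for $i\ge j$) with $p_i\le1-\alpha$ for all $i$. Then $$\Psi_j(p_1,\dots,p_{j-1},0,\dots,0;\,q_1,\dots,q_b)\le\Psi_j(1-\alpha,\alpha,0,\dots,0;\,q_1,\dots,q_b).$$
   Context: For an integer $1\le j\le b-1$ and vectors $p,q\in\mathbb R^b$, $$\Psi_j(p;q)=\frac{1}{(b-j-1)!}\sum_{\sigma\in S_b}\Big(p_{\sigma(1)}\cdots p_{\sigma(j)}\,q_{\sigma(j+1)}+q_{\sigma(1)}\cdots q_{\sigma(j)}\,p_{\sigma(j+1)}\Big),$$ where $S_b$ is the set of permutations of $\{1,\dots,b\}$; the first $b$ arguments form $p$ and the last $b$ form $q$. *)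

From mathcomp Require Import all_boot all_order all_algebra all_fingroup.
Set Implicit Arguments. Unset Strict Implicit. Unset Printing Implicit Defensive.
Import Order.TTheory GRing.Theory Num.Theory.
Local Open Scope ring_scope.

(* Vectors in R^b are functions 'I_b -> R, with 0-based indices: the paper's
   coordinate x_k is x (k-1).
   The factor x_{s(j+1)} is written as the single-term sum over the unique
   k : 'I_b with val k = j (0-based index of the paper's position j+1). *)
Definition Psi (R : fieldType) (b j : nat) (p q : 'I_b -> R) : R :=
  (((b - j - 1)`!)%:R)^-1 *
  \sum_(s : 'S_b)
     ((\prod_(i < b | (i < j)%N) p (s i)) * (\sum_(k < b | val k == j) q (s k))
    + (\prod_(i < b | (i < j)%N) q (s i)) * (\sum_(k < b | val k == j) p (s k))).

From mathcomp Require Import all_boot all_order all_algebra all_fingroup.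
From mathcomp Require Import zify lra.
Set Implicit Arguments. Unset Strict Implicit.
Import Order.TTheory GRing.Theory Num.Theory.
Local Open Scope ring_scope.

(* Write Psi j x y = c * (T(x, y) + T(y, x)) with c = 1/(b-j-1)! and
   T(x, y) = sum_s (prod_{i<j} x(s i)) * y(s j)   (0-based positions).
   - T(p, q) = 0: the leading product uses j distinct coordinates of p, but p
     is supported on the j-1 coordinates {0, .., j-2} (pigeonhole), whereas
     T(p', q) >= 0 for the comparison vector p' = (1-alpha, alpha, 0, ..).
   - T(q, x) is linear in x: grouping permutations by the value k = s j gives
     T(q, x) = sum_k x k * F k with the fiber weight
     F k = sum_{s j = k} prod_{i<j} q(s i).
   - F is antitone in q: composing with the transposition (k k') exchanges
     the fibers of k and k', so q k' <= q k implies F k <= F k'.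
   - Since q is nondecreasing on {0, .., j-2}, F 1 dominates F k on the
     support of p away from 0, so T(q, p) <= p_0 F 0 + (1 - p_0) F 1, and
     F 1 <= F 0 with p_0 <= 1 - alpha bounds this by T(q, p') (for j = 2
     the support forces p_0 = 1 and hence alpha = 0). *)

Section PermutationSums.

Variables (R : realFieldType) (b j : nat).

Definition lead_prod (x : 'I_b -> R) (s : 'S_b) : R :=
  \prod_(i < b | (i < j)%N) x (s i).

Definition fiber_weight (jj : 'I_b) (q : 'I_b -> R) (k : 'I_b) : R :=
  \sum_(s : 'S_b | s jj == k) lead_prod q s.

(* Pigeonhole: j distinct coordinates cannot all lie in {0, .., m-1} when
   m < j, so the leading product of a vector supported there vanishes. *)
Lemma lead_prod_small_support (m : nat) (x : 'I_b -> R) (s : 'S_b) :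
  (m < j)%N -> (j <= b)%N -> (forall i : 'I_b, (m <= i)%N -> x i = 0) ->
  lead_prod x s = 0.
Proof.
move=> mj jb x0.
have [i /andP[ij hi] | small] :=
  pickP [pred i : 'I_b | (i < j)%N && (m <= s i)%N].
  by rewrite /lead_prod (bigD1 i) //= x0 // mul0r.
have lt_m (i : 'I_j) : (s (widen_ord jb i) < m)%N.
  have := small (widen_ord jb i); rewrite /= ltn_ord /=.
  by move/negbT; rewrite -ltnNge.
pose f (i : 'I_j) : 'I_m := Ordinal (lt_m i).
have f_inj : injective f.
  by move=> i i' [] /val_inj /perm_inj [] /val_inj.
by have := leq_card f f_inj; rewrite !card_ord; lia.
Qed.

Lemma lead_sum_by_fiber (jj : 'I_b) (q x : 'I_b -> R) :
  \sum_(s : 'S_b) lead_prod q s * (\sum_(k < b | val k == val jj) x (s k))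
  = \sum_(k < b) x k * fiber_weight jj q k.
Proof.
rewrite (partition_big (fun s : 'S_b => s jj) predT) //=.
apply: eq_bigr => k _; rewrite /fiber_weight mulr_sumr.
apply: eq_big => // s /eqP sjj.
rewrite (big_pred1 jj) => [|i /=]; last by rewrite val_eqE.
by rewrite sjj mulrC.
Qed.

(* Fiber weights are antitone in q: the transposition (k k') maps the fiber
   of k' onto that of k while replacing q k' by the larger q k. *)
Lemma fiber_weight_antitone (jj : 'I_b) (q : 'I_b -> R) (k k' : 'I_b) :
  val jj = j -> (forall i, 0 <= q i) -> q k' <= q k ->
  fiber_weight jj q k <= fiber_weight jj q k'.
Proof.
move=> hjj q0 hkk.
rewrite /fiber_weight [X in _ <= X](reindex_inj (mulIg (tperm k k'))) /=.
under [X in _ <= X]eq_bigl => s do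
  rewrite permM (canF_eq (tpermK k k')) tpermR.
apply: ler_sum => s /eqP sjj.
apply: ler_prod => i ij; rewrite q0 /= permM.
case: tpermP => [sik | -> | _ _] //.
by move: ij; rewrite -sjj in sik; rewrite (perm_inj sik) hjj ltnn.
Qed.

(* Reduction of the comparison of Psi j x q and Psi j y q to that of the
   terms T(q, x) and T(q, y), when x has support of size less than j (so
   that T(x, q) = 0) and y, q are nonnegative (so that T(y, q) >= 0). *)
Lemma Psi_le_of_lead_terms (m : nat) (x y q : 'I_b -> R) :
  (m < j)%N -> (j <= b)%N -> (forall i : 'I_b, (m <= i)%N -> x i = 0) ->
  (forall i, 0 <= y i) -> (forall i, 0 <= q i) ->
  \sum_(s : 'S_b) lead_prod q s * (\sum_(k < b | val k == j) x (s k)) <=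
  \sum_(s : 'S_b) lead_prod q s * (\sum_(k < b | val k == j) y (s k)) ->
  Psi j x q <= Psi j y q.
Proof.
move=> mj jb xsupp y0 q0 lead_le.
rewrite /Psi ler_wpM2l ?invr_ge0 ?ler0n // !big_split /= lerD //.
rewrite big1 => [|s _]; last first.
  by rewrite -/(lead_prod x s) (lead_prod_small_support _ mj) ?mul0r.
by apply: sumr_ge0 => s _; rewrite mulr_ge0 ?prodr_ge0 ?sumr_ge0.
Qed.

End PermutationSums.

Lemma convex_sum_le_two_point (R : realFieldType) (I : finType)
    (w f : I -> R) (i0 i1 : I) :
  (forall i, 0 <= w i) -> \sum_i w i = 1 ->
  (forall i, i != i0 -> w i != 0 -> f i <= f i1) ->
  \sum_i w i * f i <= w i0 * f i0 + (1 - w i0) * f i1.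
Proof.
move=> w0 w1 dom; rewrite (bigD1 i0) //= lerD2l.
have -> : 1 - w i0 = \sum_(i | i != i0) w i.
  by rewrite -w1 (bigD1 i0) //= addrAC subrr add0r.
rewrite mulr_suml; apply: ler_sum => i ni0.
have [-> | wi] := eqVneq (w i) 0; first by rewrite !mul0r.
by apply: ler_wpM2l => //; apply: dom.
Qed.

Lemma two_point_shift_le (R : realFieldType) (w a f0 f1 : R) :
  w <= 1 - a -> f1 <= f0 \/ w = 1 - a ->
  w * f0 + (1 - w) * f1 <= (1 - a) * f0 + a * f1.
Proof.
move=> wa [f10 | ->]; last by rewrite opprB addrCA subrr addr0.
have : 0 <= (1 - a - w) * (f0 - f1) by rewrite mulr_ge0 // subr_ge0.
lra.
Qed.

Theorem mainTheorem8 (R : realFieldType) (b j : nat) (p q : 'I_b -> R) (alpha : R) :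
  (3 <= b)%N -> (2 <= j)%N -> (j <= b - 1)%N ->
  (forall i, 0 <= q i) ->
  (forall i i' : 'I_b, (i <= i')%N -> (i' < j - 1)%N -> q i <= q i') ->
  0 <= alpha -> alpha < 1 ->
  (forall i, 0 <= p i) -> \sum_(i < b) p i = 1 ->
  (forall i : 'I_b, (j - 1 <= i)%N -> p i = 0) ->
  (forall i, p i <= 1 - alpha) ->
  Psi j p q <=
  Psi j (fun i : 'I_b => if val i == 0%N then 1 - alpha
                         else if val i == 1%N then alpha else 0) q.
Proof.
move=> b3 j2 jb q0 qmon a0 a1 p0 psum psupp pbound.
set p' := fun i : 'I_b => _.
have p'0 i : 0 <= p' i by rewrite /p'; case: ifP => _; [lra | case: ifP => _; lra].
have [jb' b0 b1] : [/\ (j < b)%N, (0 < b)%N & (1 < b)%N] by split; lia.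
pose jj : 'I_b := Ordinal jb'.
pose i0 : 'I_b := Ordinal b0.
pose i1 : 'I_b := Ordinal b1.
pose F := fiber_weight j jj q.
have Fanti := @fiber_weight_antitone R b j jj q.
apply: (@Psi_le_of_lead_terms R b j (j - 1) p p' q _ _ psupp p'0 q0); [lia | lia |].
rewrite !(lead_sum_by_fiber j jj) -/F.
have -> : \sum_k p' k * F k = (1 - alpha) * F i0 + alpha * F i1.
  rewrite (bigD1 i0) //= (bigD1 i1) //= big1 ?addr0 // => k.
  by rewrite /p' -!val_eqE /= => /andP[/negbTE-> /negbTE->]; rewrite mul0r.
have F1_dom k : k != i0 -> p k != 0 -> F k <= F i1.
  move=> kn0 pk; have [-> // | kn1] := eqVneq k i1.
  have k_supp : (k < j - 1)%N by rewrite ltnNge; apply: contra pk => /psupp ->.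
  by apply: Fanti => //; apply: qmon => //; move: kn0 kn1; rewrite -!val_eqE /=; lia.
apply: le_trans (convex_sum_le_two_point p0 psum F1_dom) _.
apply: two_point_shift_le; first exact: pbound.
have [j_eq2 | j_gt2] := eqVneq j 2; [right | left].
  have p_i0 : p i0 = 1.
    rewrite -psum (bigD1 i0) //= big1 ?addr0 // => k.
    by rewrite -val_eqE /= => kn0; apply: psupp; lia.
  by have := pbound i0; rewrite p_i0; lra.
by apply: Fanti => //; apply: qmon => /=; lia.
Qed.
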